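(* Let $(X,X')$ be an exchangeable pair of random elements, and let $W=W(X)$ and $W'=W(X')$ be integer valued. Define $Q_m(x)=\mathbb{P}[W'=W+m\mid X=x]$ and $q_m=\mathbb{E}Q_m(X)=\mathbb{P}[W'=W+m]$. Then for every positive integer $m$ (with $q_m>0$), \[ D_{1,m}(\mathcal{L}(W))\le\frac{\sqrt{\mathrm{Var}\,Q_m(X)}+\sqrt{\mathrm{Var}\,Q_{-m}(X)}}{q_m}. \]
   Context: For $f:\mathbb{Z}\to\mathbb{R}$, $\|f\|_1=\sum_i|f(i)|$; $\Delta^0f=f$, $\Delta^{n+1}f(k)=\Delta^nf(k+1)-\Delta^nf(k)$. For an integer-valued random variable $W$ with distribution function $F(j)=\mathbb{P}[W\le j]$ and positive integer $m$, $\bar F^m(j)=\frac{F(j)+\dots+F(j-m+1)}{m}$ and $D_{n,m}(\mathcal{L}(W))=m\|\Delta^{n+1}\bar F^m\|_1$. *)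

From HB Require Import structures.
From mathcomp Require Import all_boot all_order all_algebra.
From mathcomp Require Import all_classical all_reals all_analysis.
Set Implicit Arguments. Unset Strict Implicit. Unset Printing Implicit Defensive.
Import Order.TTheory GRing.Theory Num.Theory.
Local Open Scope classical_set_scope.
Local Open Scope ring_scope.

Fixpoint Delta {R : ringType} (n : nat) (f : int -> R) : int -> R :=
  match n with
  | 0%N => f
  | n'.+1 => fun k => Delta n' f (k + 1) - Delta n' f k
  end.

Definition Fbar {R : realType} (m : nat) (F : int -> R) : int -> R :=
  fun j => (\sum_(i < m) F (j - (i%:Z))) / m%:R.

Definition l1norm {R : realType} (f : int -> R) : \bar R :=
  \esum_(j in [set: int]) (`|f j|)%:E.

Definition distrfun {d} {Omega : measurableType d} {R : realType}
  (P : probability Omega R) (Y : Omega -> int) : int -> R :=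
  fun j => fine (P [set w | Y w <= j]).

Definition Dnm {d} {Omega : measurableType d} {R : realType}
  (P : probability Omega R) (n m : nat) (Y : Omega -> int) : \bar R :=
  ((m%:R : R)%:E * l1norm (Delta n.+1 (Fbar m (distrfun P Y))))%E.

Definition exchangeable {d d'} {Omega : measurableType d} {T : measurableType d'}
  {R : realType} (P : probability Omega R) (X X' : Omega -> T) : Prop :=
  [/\ measurable_fun setT X, measurable_fun setT X' &
  forall E : set (T * T), measurable E ->
    P ((fun w => (X w, X' w)) @^-1` E) = P ((fun w => (X' w, X w)) @^-1` E)].

(* Q is a version of the conditional probability P[E | X = x], i.e. a
   measurable function of x such that Q(X) is a version of P[E | sigma(X)]:
   for every measurable A, E[ 1_{X in A} Q(X) ] = P[{X in A} /\ E]. *)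
Definition cond_prob_given {d d'} {Omega : measurableType d} {T : measurableType d'}
  {R : realType} (P : probability Omega R) (X : Omega -> T) (E : set Omega)
  (Q : T -> R) : Prop :=
  measurable_fun setT Q /\
  forall A : set T, measurable A ->
    (\int[P]_(w in X @^-1` A) (Q (X w))%:E)%E = P (X @^-1` A `&` E).

From HB Require Import structures.
From mathcomp Require Import all_boot all_order all_algebra.
From mathcomp Require Import all_classical all_reals all_analysis.
From mathcomp Require Import measurable_realfun.
From mathcomp Require Import ring lra zify.
Import Order.TTheory GRing.Theory Num.Theory.
Local Open Scope classical_set_scope.
Local Open Scope ring_scope.

(* Write p_k = P[W = k] and q = q_m.  By exchangeability q_{-m} = q_m and
   P[W = k, W' = k + m] = P[W = k + m, W' = k]; by the defining property of the
   conditional probabilities the left side is E[Q_m(X); W = k] and the right side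
   E[Q_{-m}(X); W = k + m].  Subtracting both from q p_k and q p_{k+m} gives
     q |p_{k+m} - p_k| <= E[|Q_m(X) - q|; W = k] + E[|Q_{-m}(X) - q|; W = k + m],
   and summing over k, q sum_k |p_{k+m} - p_k| <= E|Q_m(X) - q| + E|Q_{-m}(X) - q|.
   Since E Q_{+-m}(X) = q, each term is at most a standard deviation by
   Cauchy-Schwarz.  Finally Delta^2 Fbar^m (j) = (p_{j+2} - p_{j+2-m}) / m, so
   D_{1,m} = sum_k |p_{k+m} - p_k|. *)

Lemma Fbar_diff (R : realType) (m : nat) (F : int -> R) (j : int) : (0 < m)%N ->
  Fbar m F (j + 1) - Fbar m F j = (F (j + 1) - F (j + 1 - m%:Z)) / m%:R.
Proof.
case: m => [//|m] _; rewrite /Fbar -mulrBl; congr (_ / _).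
rewrite big_ord_recl big_ord_recr /= subr0.
have -> : \sum_(i < m) F (j + 1 - (lift ord0 i)%:Z) =
    \sum_(i < m) F (j - (widen_ord (leqnSn m) i)%:Z).
  by apply: eq_bigr => i _; congr F; rewrite lift0 /=; lia.
have -> : j - m%:Z = j + 1 - m.+1%:Z by lia.
lra.
Qed.

Lemma Delta2_Fbar (R : realType) (m : nat) (F : int -> R) (j : int) : (0 < m)%N ->
  Delta 2 (Fbar m F) j = (Delta 1 F (j + 1) - Delta 1 F (j + 1 - m%:Z)) / m%:R.
Proof.
move=> m_gt0; rewrite /= !Fbar_diff // -mulrBl.
have -> : j + 1 - m%:Z + 1 = j + 1 + 1 - m%:Z by lia.
by congr (_ / _); lra.
Qed.

Lemma measurable_preimage_of_fibres {d} {T : measurableType d} {I : countType}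
    {W : T -> I} :
  (forall k, measurable (W @^-1` [set k])) -> forall B, measurable (W @^-1` B).
Proof.
move=> mW B; have -> : W @^-1` B = \bigcup_k W @^-1` (B `&` [set k]).
  by apply/seteqP; split => [w Bw|w [k _ []]] //; exists (W w).
apply: countable_bigcupT_measurable => [|k]; first exact: countableP.
by rewrite setI1; case: ifP; rewrite ?preimage_set0.
Qed.

Section measure_lemmas.
Context {d} {T : measurableType d} {R : realType} (mu : {measure set T -> \bar R}).

Lemma gt0_integral_le0_measure0 (D : set T) (f : T -> R) : measurable D ->
  measurable_fun D f -> (forall x, D x -> 0 < f x) ->
  (\int[mu]_(x in D) (f x)%:E <= 0)%E -> mu D = 0%E.
Proof.
move=> mD mf f0 If.
have mfE : measurable_fun D (EFin \o f : T -> \bar R) by exact/measurable_EFinP.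
have /(ae_eq_integral_abs mu mD mfE) [N [mN N0 DN]] :
    (\int[mu]_(x in D) `|(f x)%:E| = 0)%E.
  apply/eqP; rewrite eq_le integral_ge0 ?andbT //; apply: le_trans If.
  rewrite le_eqVlt (eq_integral (fun x => (f x)%:E)) ?eqxx // => x /set_mem Dx.
  by rewrite gee0_abs // lee_fin ltW // f0.
apply/eqP; rewrite eq_le measure_ge0 andbT -N0 le_measure ?inE // => x Dx.
by apply: DN => /= /(_ Dx) [] /eqP; rewrite gt_eqF // f0.
Qed.

Lemma sum_integral_fibres_le {I : eqType} (Z : T -> I) (g : T -> \bar R)
    (s : seq I) :
  uniq s -> (forall k, measurable (Z @^-1` [set k])) ->
  measurable_fun setT g -> (forall w, 0 <= g w)%E ->
  (\sum_(k <- s) \int[mu]_(w in Z @^-1` [set k]) g w <= \int[mu]_w g w)%E.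
Proof.
move=> s_uniq mZ mg g_ge0.
have mgZ k : measurable_fun setT (g \_ (Z @^-1` [set k])).
  exact/(measurable_restrictT _ (mZ k))/measurable_funTS.
under eq_bigr do rewrite integral_mkcond.
rewrite -ge0_integral_sum //; last by move=> k w _; rewrite patchE; case: ifP.
apply: ge0_le_integral => //.
- by move=> w _; apply: sume_ge0 => k _; rewrite patchE; case: ifP.
- exact: emeasurable_sum.
move=> w _; rewrite (eq_bigr (fun k => if Z w == k then g w else 0%E)); last first.
  move=> k _; rewrite patchE; have [<-|Zw_neq] := eqVneq (Z w) k; first by rewrite mem_set.
  by rewrite memNset //= => /eqP; rewrite (negbTE Zw_neq).
rewrite -big_mkcond big_const_seq (eq_count (a2 := pred1 (Z w))) => [|k /=].
  by rewrite count_uniq_mem //; case: (Z w \in s) => /=; rewrite ?adde0.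
by rewrite eq_sym.
Qed.

End measure_lemmas.

Section probability_moments.
Context {d} {Omega : measurableType d} {R : realType} (P : probability Omega R).

Lemma integral_abs_le_sqrt_integral_sqr (f : Omega -> R) : measurable_fun setT f ->
  (\int[P]_w (f w ^+ 2)%:E \is a fin_num)%E ->
  (\int[P]_w (`|f w|)%:E <= (Num.sqrt (fine (\int[P]_w (f w ^+ 2)%:E)))%:E)%E.
Proof.
move=> mf; set I := (\int[P]_w (`|f w|)%:E)%E; set V := (\int[P]_w (f w ^+ 2)%:E)%E.
move=> V_fin.
have I_ge0 : (0 <= I)%E by apply: integral_ge0 => w _; rewrite lee_fin.
(* Cauchy-Schwarz against the constant 1: integrate [2 s |f| <= f^2 + s^2],
   then take [s = \int |f|]. *)
have amgm s : 0 < s -> ((2 * s)%:E * I <= V + (s ^+ 2)%:E)%E.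
  move=> s_gt0.
  have integral_cst_s : (\int[P]_w (s ^+ 2)%:E = (s ^+ 2)%:E)%E.
    by rewrite integral_cst // -[RHS]mule1; congr (_ * _)%E; exact: probability_setT.
  have pointwise : (\int[P]_w ((2 * s) * `|f w|)%:E <=
      \int[P]_w (f w ^+ 2 + s ^+ 2)%:E)%E.
    apply: ge0_le_integral => //.
    - by move=> w _; rewrite lee_fin mulr_ge0 // mulr_ge0 // ltW.
    - exact/measurable_EFinP/measurable_funM/measurableT_comp.
    - by apply/measurable_EFinP; apply: measurable_funD => //; exact: measurable_funX.
    move=> w _; rewrite lee_fin -real_normK ?num_real //.
    by have := sqr_ge0 (`|f w| - s); rewrite sqrrB; lra.
  move: pointwise; under eq_integral do rewrite EFinM.
  rewrite ge0_integralZl_EFin //; last 2 first.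
  - exact/measurable_EFinP/measurableT_comp.
  - by rewrite mulr_ge0 // ltW.
  under [in X in (_ <= X)%E -> _]eq_integral do rewrite EFinD.
  rewrite ge0_integralD //.
  - by rewrite integral_cst_s.
  - by move=> w _; rewrite lee_fin sqr_ge0.
  - exact/measurable_EFinP/measurable_funX.
  - by move=> w _; rewrite lee_fin sqr_ge0.
have I_fin : (I \is a fin_num)%E.
  have := amgm 2^-1; rewrite invr_gt0 ltr0n => /(_ isT).
  rewrite divff ?pnatr_eq0 // mul1e -(fineK V_fin) -EFinD => /le_lt_trans.
  by rewrite ge0_fin_numE //; apply; rewrite ltey.
rewrite -(fineK I_fin) lee_fin.
have V_ge0 : 0 <= fine V by apply: fine_ge0; apply: integral_ge0 => w _; rewrite lee_fin sqr_ge0.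
have [I_le0|I_gt0] := leP (fine I) 0; first exact: le_trans I_le0 (sqrtr_ge0 _).
have := amgm _ I_gt0; rewrite -(fineK I_fin) -(fineK V_fin) -EFinM -EFinD lee_fin => h.
rewrite -(ger0_norm (ltW I_gt0)) -sqrtr_sqr ler_sqrt //.
by rewrite expr2; rewrite expr2 in h; nra.
Qed.

Lemma variance_integralE (Y : Omega -> R) :
  'V_P[Y] = (\int[P]_w ((Y w - fine 'E_P[Y]) ^+ 2)%:E)%E.
Proof.
rewrite /variance covariance.unlock expectation.unlock.
by apply: eq_integral => w _; rewrite expr2.
Qed.

Lemma integral_abs_dev_le_sqrt_variance (Y : Omega -> R) : measurable_fun setT Y ->
  'V_P[Y] \is a fin_num ->
  (\int[P]_w (`|Y w - fine 'E_P[Y]|)%:E <= (Num.sqrt (fine 'V_P[Y]))%:E)%E.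
Proof.
move=> mY; rewrite variance_integralE; apply: integral_abs_le_sqrt_integral_sqr.
exact: measurable_funB.
Qed.

Section ae_bounded.
Context {Y : Omega -> R} {M : R}.
Hypotheses (mY : measurable_fun setT Y) (Y_le : {ae P, forall w, `|Y w| <= M}).

Lemma integrable_ae_bounded : P.-integrable setT (EFin \o Y).
Proof.
apply/integrableP; split; first exact/measurable_EFinP.
apply: (@le_lt_trans _ _ (\int[P]_w (cst `|M|%:E) w)%E).
  apply: ae_ge0_le_integral => //.
  - exact/measurableT_comp/measurable_EFinP.
  - by move=> w _; rewrite lee_fin.
  - apply: filterS Y_le => w YM _; rewrite /= lee_fin.
    exact: le_trans YM (ler_norm _).
by rewrite integral_cst // -ge0_fin_numE ?mule_ge0 ?fin_numM ?fin_num_measure.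
Qed.

Lemma variance_fin_num_ae_bounded : 'V_P[Y] \is a fin_num.
Proof.
rewrite variance_integralE; set c := fine _.
rewrite ge0_fin_numE; last by apply: integral_ge0 => w _; rewrite lee_fin sqr_ge0.
apply: (@le_lt_trans _ _ (\int[P]_w (cst ((`|M| + `|c|) ^+ 2)%:E) w)%E).
  apply: ae_ge0_le_integral => //.
  - by move=> w _; rewrite lee_fin sqr_ge0.
  - exact/measurable_EFinP/measurable_funX/measurable_funB.
  - by move=> w _; rewrite lee_fin sqr_ge0.
  apply: filterS Y_le => w YM _; rewrite /= lee_fin -real_normK ?num_real //.
  have YcM : `|Y w - c| <= `|M| + `|c|.
    exact: le_trans (ler_normB _ _) (lerD (le_trans YM (ler_norm _)) (lexx _)).
  by rewrite ler_pXn2r ?nnegrE // addr_ge0.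
by rewrite integral_cst // -ge0_fin_numE ?mule_ge0 ?fin_numM ?fin_num_measure // lee_fin sqr_ge0.
Qed.

End ae_bounded.

End probability_moments.

Section distribution_function.
Context {d} {Omega : measurableType d} {R : realType} (P : probability Omega R).
Variable Y : Omega -> int.
Hypothesis mY : forall k, measurable (Y @^-1` [set k]).

Lemma Delta1_distrfun (i : int) :
  Delta 1 (distrfun P Y) i = fine (P (Y @^-1` [set i + 1])).
Proof.
rewrite /= /distrfun; set A := [set w | Y w <= i].
have mA : measurable A by exact: (measurable_preimage_of_fibres mY [set k | k <= i]).
have -> : [set w | Y w <= i + 1] = A `|` Y @^-1` [set i + 1].
  apply/seteqP; split => w /=; last by case => [|->]; rewrite /A /=; lia.
  by rewrite le_eqVlt => /orP[/eqP|]; [right|left; rewrite /A /= -ltzD1].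
rewrite measureU //; last first.
  by apply/seteqP; split => w // []; rewrite /A /= => + Yw; rewrite Yw; lia.
by rewrite fineD ?fin_num_measure // addrAC subrr add0r.
Qed.

Lemma Dnm1_le (m : nat) (B : R) : (0 < m)%N ->
  (forall s : seq int, uniq s -> \sum_(k <- s)
     `|fine (P (Y @^-1` [set k + m%:Z])) - fine (P (Y @^-1` [set k]))| <= B) ->
  (Dnm P 1 m Y <= B%:E)%E.
Proof.
move=> m_gt0 sum_le; have mR_gt0 : 0 < m%:R :> R by rewrite ltr0n.
have esum_le : (l1norm (Delta 2 (Fbar m (distrfun P Y))) <= (B / m%:R)%:E)%E.
  apply: ge_ereal_sup => _ [A [finA _] <-].
  rewrite fsbig_finite // sumEFin lee_fin.
  under eq_bigr do rewrite Delta2_Fbar // !Delta1_distrfun normrM normfV normr_nat.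
  rewrite -mulr_suml ler_pM2r ?invr_gt0 //.
  have shift j : j + 1 + 1 = (j + 1 - m%:Z + 1) + m%:Z by lia.
  under eq_bigr do rewrite shift.
  rewrite -(big_map (fun j => j + 1 - m%:Z + 1) xpredT
    (fun k => `|fine (P (Y @^-1` [set k + m%:Z])) - fine (P (Y @^-1` [set k]))|)).
  by apply: sum_le; rewrite map_inj_uniq ?finmap.fset_uniq // => j j' /addIr /addIr /addIr.
rewrite /Dnm (@le_trans _ _ (m%:R%:E * (B / m%:R)%:E)%E) //.
  by rewrite lee_pmul2l ?lte_fin.
by rewrite -EFinM mulrC divfK // gt_eqF.
Qed.

End distribution_function.

Section conditional_probability.
Context {d d'} {Omega : measurableType d} {T : measurableType d'} {R : realType}
  {P : probability Omega R} {X : Omega -> T} {E : set Omega} {Q : T -> R}.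
Hypotheses (mX : measurable_fun setT X) (mE : measurable E)
  (hQ : cond_prob_given P X E Q).

Let mQX : measurable_fun setT (Q \o X). Proof. exact: measurableT_comp hQ.1 mX. Qed.

Let mQ_preimage (B : set R) : measurable B -> measurable (Q @^-1` B).
Proof. by move=> mB; rewrite -[_ @^-1` _]setTI; exact: hQ.1. Qed.

Let mX_preimage (A : set T) : measurable A -> measurable (X @^-1` A).
Proof. by move=> mA; rewrite -[_ @^-1` _]setTI; exact: mX. Qed.

Lemma cond_prob_ge0_ae : {ae P, forall w, 0 <= Q (X w)}.
Proof.
set D := X @^-1` (Q @^-1` `]-oo, 0[).
have mD : measurable D by exact/mX_preimage/mQ_preimage.
have DE w : D w -> Q (X w) < 0 by rewrite /D /= in_itv.
have PD0 : P D = 0%E.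
  apply: (@gt0_integral_le0_measure0 _ _ _ _ _ (fun w => - Q (X w)) mD).
  - exact/measurable_funTS/measurableT_comp.
  - by move=> w /DE; rewrite oppr_gt0.
  have -> : (\int[P]_(w in D) (- Q (X w))%:E = - \int[P]_(w in D) (Q (X w))%:E)%E.
    rewrite -[LHS]oppeK -integral_ge0N; last first.
      by move=> w /DE ?; rewrite lee_fin oppr_ge0 ltW.
    by congr -%E; apply: eq_integral => w _; rewrite EFinN oppeK.
  by rewrite (hQ.2 _ (mQ_preimage _ (measurable_itv _))) oppe_le0.
by exists D; split => // w /= /negP; rewrite -ltNge /D /= in_itv.
Qed.

Lemma cond_prob_le1_ae : {ae P, forall w, Q (X w) <= 1}.
Proof.
set D := X @^-1` (Q @^-1` `]1, +oo[).
have mD : measurable D by exact/mX_preimage/mQ_preimage.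
have DE w : D w -> 1 < Q (X w) by rewrite /D /= in_itv andbT.
have PD0 : P D = 0%E.
  apply: (@gt0_integral_le0_measure0 _ _ _ _ _ (fun w => Q (X w) - 1) mD).
  - exact/measurable_funTS/measurable_funB.
  - by move=> w /DE; rewrite subr_gt0.
  have split_one : (\int[P]_(w in D) (Q (X w))%:E =
      \int[P]_(w in D) (Q (X w) - 1)%:E + P D)%E.
    rewrite -[P D]mul1e -integral_cst // -ge0_integralD //.
    - by apply: eq_integral => w _; rewrite /= -EFinD subrK.
    - by move=> w /DE ?; rewrite lee_fin subr_ge0 ltW.
    - exact/measurable_EFinP/measurable_funTS/measurable_funB.
  have : (P (D `&` E) <= P D)%E by rewrite le_measure ?inE //; exact: measurableI.
  rewrite -(hQ.2 _ (mQ_preimage _ (measurable_itv _))) -/D split_one.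
  by rewrite -[X in (_ <= X)%E]add0e leeD2rE // fin_num_measure.
by exists D; split => // w /= /negP; rewrite -ltNge /D /= in_itv andbT.
Qed.

Lemma cond_prob_bounded_ae : {ae P, forall w, `|Q (X w)| <= 1}.
Proof.
apply: filterS2 cond_prob_ge0_ae cond_prob_le1_ae => w Q_ge0 Q_le1.
by rewrite ger0_norm.
Qed.

Lemma cond_prob_expectation : ('E_P[Q \o X] = P E)%E.
Proof.
by rewrite unlock; have := hQ.2 _ measurableT; rewrite preimage_setT setTI.
Qed.

Lemma cond_prob_abs_dev_le :
  (\int[P]_w (`|Q (X w) - fine (P E)|)%:E <= (Num.sqrt (fine 'V_P[Q \o X]))%:E)%E.
Proof.
rewrite -cond_prob_expectation; apply: (integral_abs_dev_le_sqrt_variance P _ mQX).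
exact: variance_fin_num_ae_bounded mQX cond_prob_bounded_ae.
Qed.

Lemma cond_prob_preimage_dev_le (A : set T) (q : R) : measurable A ->
  (`|q * fine (P (X @^-1` A)) - fine (P (X @^-1` A `&` E))|%:E <=
   \int[P]_(w in X @^-1` A) (`|Q (X w) - q|)%:E)%E.
Proof.
move=> mA; have mXA := mX_preimage _ mA.
have iQ : P.-integrable (X @^-1` A) (EFin \o (Q \o X)).
  apply: integrableS measurableT mXA (subsetT _) _.
  exact: integrable_ae_bounded mQX cond_prob_bounded_ae.
have iq : P.-integrable (X @^-1` A) (fun w => q%:E).
  exact: finite_measure_integrable_cst.
have c_fin : P (X @^-1` A `&` E) \is a fin_num.
  by rewrite fin_num_measure //; exact: measurableI.
rewrite -abse_EFin.
have -> : (q * fine (P (X @^-1` A)) - fine (P (X @^-1` A `&` E)))%:E =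
    (\int[P]_(w in X @^-1` A) (q%:E - (Q (X w))%:E))%E.
  rewrite integralB_EFin // integral_cst // (hQ.2 _ mA).
  by rewrite EFinB EFinM !fineK // fin_num_measure.
apply: le_trans (le_abse_integral _ _ _) _ => //.
  exact/measurable_EFinP/measurable_funB/measurable_funTS.
apply: ge0_le_integral => //.
- exact/measurableT_comp/measurable_EFinP/measurable_funB/measurable_funTS.
- apply/measurable_EFinP; apply: measurableT_comp => //.
  by apply: measurable_funB => //; exact: measurable_funTS.
by move=> w _; rewrite -EFinB abse_EFin distrC.
Qed.

End conditional_probability.

Section exchangeable_pair.
Context {d d'} {Omega : measurableType d} {T : measurableType d'} {R : realType}
  {P : probability Omega R} {X X' : Omega -> T} {W : T -> int}.
Hypotheses (hXX' : exchangeable P X X') (mW : forall k, measurable (W @^-1` [set k])).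

Local Notation fibre k := (X @^-1` (W @^-1` [set k])).
Local Notation jump j := [set w | W (X' w) = W (X w) + j].

Let mX : measurable_fun setT X. Proof. by case: hXX'. Qed.

Let mX_preimage (A : set T) : measurable A -> measurable (X @^-1` A).
Proof. by move=> mA; rewrite -[_ @^-1` _]setTI; exact: mX. Qed.

Let mX'_preimage (A : set T) : measurable A -> measurable (X' @^-1` A).
Proof. by case: hXX' => _ mX' _ mA; rewrite -[_ @^-1` _]setTI; exact: mX'. Qed.

Let swapP (G : set (T * T)) : measurable G ->
  P ((fun w => (X w, X' w)) @^-1` G) = P ((fun w => (X' w, X w)) @^-1` G).
Proof. by case: hXX' => _ _; apply. Qed.

Lemma exchangeable_preimage_swap (A B : set T) : measurable A -> measurable B ->
  P (X @^-1` A `&` X' @^-1` B) = P (X @^-1` B `&` X' @^-1` A).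
Proof. by move=> mA mB; rewrite [in RHS]setIC; exact: swapP (measurableX mA mB). Qed.

Lemma measurable_jump (j : int) : measurable (jump j).
Proof.
have -> : jump j = \bigcup_k (fibre k `&` X' @^-1` (W @^-1` [set k + j])).
  apply/seteqP; split => [w /= Ej|w [k _ /= [-> ->]]] //.
  by exists (W (X w)).
apply: countable_bigcupT_measurable => [|k]; first exact: countableP.
by apply: measurableI; [exact: mX_preimage|exact: mX'_preimage].
Qed.

Lemma fibre_jump_swap (k j : int) :
  P (fibre k `&` jump j) = P (fibre (k + j) `&` jump (- j)).
Proof.
have fibre_jumpE k' j' : fibre k' `&` jump j' = fibre k' `&` X' @^-1` (W @^-1` [set k' + j']).
  by apply/seteqP; split => w /= [Xk Ej]; split => //; rewrite Ej Xk.
by rewrite !fibre_jumpE addrK exchangeable_preimage_swap.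
Qed.

Lemma jump_swap (j : int) : P (jump j) = P (jump (- j)).
Proof.
have mG : measurable [set z : T * T | W z.2 = W z.1 + j].
  have -> : [set z : T * T | W z.2 = W z.1 + j] =
      \bigcup_k (W @^-1` [set k] `*` W @^-1` [set k + j]).
    apply/seteqP; split => [[x y] /= Gxy|[x y] [k _ /= [-> ->]]] //.
    by exists (W x).
  apply: countable_bigcupT_measurable => [|k]; first exact: countableP.
  exact: measurableX.
have -> : jump (- j) = (fun w => (X' w, X w)) @^-1` [set z | W z.2 = W z.1 + j].
  by apply/seteqP; split => w /= ->; rewrite ?subrK ?addrK.
exact: swapP mG.
Qed.

Local Notation p k := (fine (P (fibre k))).

Lemma fibre_dev_le {j : int} (k : int) {Qp Qn : T -> R} {q : R} : 0 <= q ->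
  cond_prob_given P X (jump j) Qp -> cond_prob_given P X (jump (- j)) Qn ->
  ((q * `|p (k + j) - p k|)%:E <=
   \int[P]_(w in fibre k) (`|Qp (X w) - q|)%:E +
   \int[P]_(w in fibre (k + j)%R) (`|Qn (X w) - q|)%:E)%E.
Proof.
move=> q_ge0 hQp hQn.
have dev_p := cond_prob_preimage_dev_le mX (measurable_jump j) hQp _ q (mW k).
have dev_n := cond_prob_preimage_dev_le mX (measurable_jump (- j)) hQn _ q (mW (k + j)).
rewrite -fibre_jump_swap in dev_n.
apply: le_trans (leeD dev_p dev_n); rewrite -EFinD lee_fin.
set c := fine (P (fibre k `&` jump j)).
have -> : q * `|p (k + j) - p k| = `|(q * p k - c) - (q * p (k + j) - c)|.
  have -> : (q * p k - c) - (q * p (k + j) - c) = q * (p k - p (k + j)) by ring.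
  by rewrite normrM ger0_norm // distrC.
exact: ler_normB.
Qed.

Lemma sum_fibre_dev_le {j : int} {Qp Qn : T -> R} {q : R} {s : seq int} : 0 <= q ->
  cond_prob_given P X (jump j) Qp -> cond_prob_given P X (jump (- j)) Qn -> uniq s ->
  ((q * \sum_(k <- s) `|p (k + j) - p k|)%:E <=
   \int[P]_w (`|Qp (X w) - q|)%:E + \int[P]_w (`|Qn (X w) - q|)%:E)%E.
Proof.
move=> q_ge0 hQp hQn s_uniq.
have mdev (Q : T -> R) : measurable_fun setT Q ->
    measurable_fun setT (fun w => (`|Q (X w) - q|)%:E).
  move=> mQ; apply/measurable_EFinP; apply: measurableT_comp => //.
  by apply: measurable_funB => //; exact: measurableT_comp mQ mX.
rewrite mulr_sumr -sumEFin.
apply: le_trans (lee_sum s (fun k _ => fibre_dev_le k q_ge0 hQp hQn)) _.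
have fibre_sum_le (Q : T -> R) (r : seq int) : measurable_fun setT Q -> uniq r ->
    (\sum_(k <- r) \int[P]_(w in fibre k) (`|Q (X w) - q|)%:E <=
     \int[P]_w (`|Q (X w) - q|)%:E)%E.
  move=> mQ r_uniq; apply: (sum_integral_fibres_le P (W \o X)) => // [k|].
  - exact: mX_preimage (W @^-1` [set k]) (mW k).
  - exact: mdev.
rewrite big_split /=; apply: leeD; first exact: fibre_sum_le hQp.1 s_uniq.
rewrite -(big_map (fun k => k + j) xpredT
  (fun k => \int[P]_(w in fibre k) (`|Qn (X w) - q|)%:E)%E).
by apply: fibre_sum_le hQn.1 _; rewrite map_inj_uniq // => k k' /addIr.
Qed.

End exchangeable_pair.

Theorem theorem3 (d d' : measure_display) (Omega : measurableType d)
  (T : measurableType d') (R : realType) (P : probability Omega R)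
  (X X' : Omega -> T) (W : T -> int) (m : nat) (Qp Qn : T -> R) :
  exchangeable P X X' ->
  (forall k : int, measurable (W @^-1` [set k])) ->
  (0 < m)%N ->
  cond_prob_given P X [set w | W (X' w) = W (X w) + m%:Z] Qp ->
  cond_prob_given P X [set w | W (X' w) = W (X w) - m%:Z] Qn ->
  let q := fine (P [set w | W (X' w) = W (X w) + m%:Z]) in
  0 < q ->
  (Dnm P 1 m (W \o X) <=
    ((Num.sqrt (fine ('V_P[Qp \o X])) + Num.sqrt (fine ('V_P[Qn \o X]))) / q)%:E)%E.
Proof.
move=> hXX' mW m_gt0 hQp hQn q q_gt0.
have mX : measurable_fun setT X by case: hXX'.
have mE j := measurable_jump hXX' mW j.
apply: Dnm1_le => // [k|s s_uniq].
  by rewrite -[_ @^-1` _]setTI; exact: (mX measurableT _ (mW k)).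
rewrite ler_pdivlMr // mulrC -lee_fin.
apply: le_trans (sum_fibre_dev_le hXX' mW (ltW q_gt0) hQp hQn s_uniq) _.
rewrite EFinD; apply: leeD; first exact: cond_prob_abs_dev_le mX (mE _) hQp.
by rewrite /q (jump_swap hXX' mW); exact: cond_prob_abs_dev_le mX (mE _) hQn.
Qed.
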